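(* Let $\delta>0$, $L \in \mathbb N$, $A \subset \Lambda_n$, $x,y \in A$ with $\bar y = \bar x + L$, and let $\gamma$ be a self-avoiding nearest-neighbour walk in $A$ from $x$ to $y$. Assume $|\gamma| < (1+\delta) L$. Then $\gamma$ has at least $(1 - 3\delta) L$ pre-regeneration points.
   Context: $\Lambda_n=([0,n]\times(-n/2,n/2]^{d-1})\cap\mathbb Z^d$ with nearest-neighbour edges and periodic boundary conditions in the last $d-1$ coordinates; points $x=(\bar x,\hat x)$. A self-avoiding walk is identified with its set of vertices $\gamma$, totally ordered by order of visit; $|\gamma|$ is its number of vertices. For $w\in\Lambda_n$, $\mathcal C_w=\{u\in\Lambda_n:\bar u-\bar w\ge|\hat u-\hat w|\}\cup\{u\in\Lambda_n:\bar u\ge\bar w+\log n\}$ (with $|\hat u-\hat w|$ the transverse distance). A point $w\in\gamma$ is a pre-regeneration point of $\gamma$ if $u\in\mathcal C_w$ for all $u\in\gamma$ with $u\ge w$, and $\bar u<\bar w$ for all $u\in\gamma$ with $u<w$. *)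

From Stdlib Require Import Reals Lra Lia ZArith List.
Open Scope R_scope.

(* A point x = (xbar, xhat) with xbar : Z and xhat : list Z (the last d-1
   coordinates). *)
Definition point : Type := (Z * list Z)%type.
Definition pbar (x : point) : Z := fst x.
Definition phat (x : point) : list Z := snd x.

Definition in_Lambda (d n : nat) (x : point) : Prop :=
  (0 <= pbar x <= Z.of_nat n)%Z /\
  length (phat x) = Nat.pred d /\
  Forall (fun z => (- Z.of_nat n < 2 * z <= Z.of_nat n)%Z) (phat x).

Definition per_adj1 (n : nat) (a b : Z) : Prop :=
  ((a - b - 1) mod Z.of_nat n = 0)%Z \/ ((a - b + 1) mod Z.of_nat n = 0)%Z.

(* Nearest-neighbour adjacency in Lambda_n, periodic in the last d-1
   coordinates. *)
Definition nn_adj (n : nat) (x y : point) : Prop :=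
  (Z.abs (pbar x - pbar y) = 1%Z /\ phat x = phat y) \/
  (pbar x = pbar y /\ length (phat x) = length (phat y) /\
   exists i, (i < length (phat x))%nat /\
     per_adj1 n (nth i (phat x) 0%Z) (nth i (phat y) 0%Z) /\
     forall j, j <> i -> nth j (phat x) 0%Z = nth j (phat y) 0%Z).

Definition tor_dist1 (n : nat) (a b : Z) : Z :=
  let r := ((a - b) mod Z.of_nat n)%Z in Z.min r (Z.of_nat n - r).

Definition transverse_dist (n : nat) (u w : list Z) : R :=
  sqrt (fold_right Rplus 0
          (map (fun p => (IZR (tor_dist1 n (fst p) (snd p))) ^ 2)
               (combine u w))).

Definition cone (d n : nat) (w u : point) : Prop :=
  in_Lambda d n u /\
  (IZR (pbar u - pbar w) >= transverse_dist n (phat u) (phat w) \/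
   IZR (pbar u) >= IZR (pbar w) + ln (INR n)).

Definition saw_in (n : nat) (A : point -> Prop) (x y : point)
  (gamma : list point) : Prop :=
  NoDup gamma /\
  (forall u, In u gamma -> A u) /\
  hd_error gamma = Some x /\
  last gamma x = y /\ gamma <> nil /\
  (forall i, (S i < length gamma)%nat ->
     nn_adj n (nth i gamma x) (nth (S i) gamma x)).

Definition pre_regeneration (d n : nat) (gamma : list point) (j : nat)
  : Prop :=
  (j < length gamma)%nat /\
  let w := nth j gamma (0%Z, nil) in
  (forall i, (j <= i < length gamma)%nat ->
      cone d n w (nth i gamma (0%Z, nil))) /\
  (forall i, (i < j)%nat -> (pbar (nth i gamma (0%Z, nil)) < pbar w)%Z).

(* Follow a height function along the walk that goes up by one on every
   forward step (first coordinate +1) and down by one on every other step.  The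
   first coordinate minus the height counts transverse steps, hence bounds the
   transverse displacement.  Consequently every ladder point of the height (a
   strict running maximum that is never undercut later) is a pre-regeneration
   point.  A +-1 walk of m steps with D down steps has at least m - 3D ladder
   points, and since the first coordinate advances by L we get D <= m - L, so
   there are at least 3L - 2m > (1 - 2 delta) L of them. *)

From Stdlib Require Import Reals ZArith List Lia Lra.
Open Scope R_scope.

Lemma nth_length_last {T} (a : T) l d d' : nth (length l) (a :: l) d = last (a :: l) d'.
Proof.
  revert a. induction l as [|b l IH]; intros a; [reflexivity|].
  exact (IH b).
Qed.

Lemma NoDup_length_le1 {T} (l : list T) :
  NoDup l -> (forall a b, In a l -> In b l -> a = b) -> (length l <= 1)%nat.
Proof.
  intros Hnd Heq. destruct l as [|a [|b l]]; simpl; try lia.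
  inversion Hnd as [|? ? Hab]; subst. exfalso. apply Hab.
  rewrite (Heq a b) by (simpl; auto). simpl; auto.
Qed.

Section LadderPoints.

Local Open Scope Z_scope.

Variable p : nat -> Z.

Definition ladder_point (m j : nat) : Prop :=
  (j <= m)%nat /\ (forall i, (i < j)%nat -> p i < p j) /\
  (forall k, (j <= k <= m)%nat -> p j <= p k).

Fixpoint down_steps (m : nat) : Z :=
  match m with
  | O => 0
  | S m' => down_steps m' + if p (S m') <? p m' then 1 else 0
  end.

Fixpoint prefix_max (m : nat) : Z :=
  match m with
  | O => p O
  | S m' => Z.max (prefix_max m') (p (S m'))
  end.

Definition ladder_bound (m : nat) (k : Z) : Prop :=
  exists J, NoDup J /\ (forall j, In j J -> ladder_point m j) /\
    k <= Z.of_nat (length J).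

Hypothesis unit_steps : forall i, p (S i) = p i + 1 \/ p (S i) = p i - 1.

Lemma prefix_max_ge i m : (i <= m)%nat -> p i <= prefix_max m.
Proof.
  induction m as [|m IH]; intros Hi; simpl.
  - replace i with O by lia. lia.
  - destruct (Nat.eq_dec i (S m)) as [->|]; [lia|]. specialize (IH ltac:(lia)). lia.
Qed.

Lemma ladder_point_inj m j j' :
  ladder_point m j -> ladder_point m j' -> p j = p j' -> j = j'.
Proof.
  intros [_ [Hj _]] [_ [Hj' _]] E.
  destruct (Nat.lt_total j j') as [h|[h|h]]; auto.
  - specialize (Hj' j h). lia.
  - specialize (Hj j' h). lia.
Qed.

Lemma ladder_point_extend m j :
  ladder_point m j -> p j <= p (S m) -> ladder_point (S m) j.
Proof.
  intros [Hjm [Hbefore Hafter]] Hle. split; [lia|]. split; [exact Hbefore|].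
  intros k Hk. destruct (Nat.eq_dec k (S m)) as [->|]; [exact Hle|]. apply Hafter. lia.
Qed.

Lemma ladder_point_record m :
  prefix_max m < p (S m) -> ladder_point (S m) (S m).
Proof.
  intros Hrec. split; [lia|]. split.
  - intros i Hi. assert (Hle := prefix_max_ge i m ltac:(lia)). lia.
  - intros k Hk. replace k with (S m) by lia. lia.
Qed.

Lemma ladder_bound_up_step m k : p (S m) = p m + 1 -> ladder_bound m k ->
  ladder_bound (S m) (k + prefix_max (S m) - prefix_max m).
Proof.
  intros Hup [J [Hnd [Hlad Hk]]].
  assert (Hm := prefix_max_ge m m (le_n m)).
  assert (Hext : forall j, In j J -> ladder_point (S m) j).
  { intros j Hj. apply ladder_point_extend; [auto|].
    destruct (Hlad j Hj) as [Hjm [_ Hafter]]. specialize (Hafter m ltac:(lia)). lia. }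
  simpl prefix_max. destruct (Z.le_gt_cases (p (S m)) (prefix_max m)) as [Hle|Hgt].
  - exists J. split; [exact Hnd|split; [exact Hext|lia]].
  - exists (S m :: J). split; [|split].
    + constructor; [|exact Hnd]. intros Hin. destruct (Hlad _ Hin). lia.
    + intros j [<-|Hj]; [apply ladder_point_record; lia|auto].
    + simpl length. lia.
Qed.

Lemma ladder_bound_down_step m k : p (S m) = p m - 1 -> ladder_bound m k ->
  ladder_bound (S m) (k - 1).
Proof.
  intros Hdown [J [Hnd [Hlad Hk]]].
  set (f := fun j => p j <=? p (S m)).
  exists (filter f J). split; [apply NoDup_filter, Hnd|]. split.
  - intros j Hj. apply filter_In in Hj as [Hj Hf]. apply Z.leb_le in Hf.
    apply ladder_point_extend; auto.
  - assert (Hdropped : (length (filter (fun j => negb (f j)) J) <= 1)%nat).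
    { apply NoDup_length_le1; [apply NoDup_filter, Hnd|].
      assert (Htop : forall j, In j (filter (fun j => negb (f j)) J) ->
                             ladder_point m j /\ p j = p m).
      { intros j Hj. apply filter_In in Hj as [Hj Hf].
        apply Bool.negb_true_iff, Z.leb_gt in Hf.
        destruct (Hlad j Hj) as [Hjm [Hbefore Hafter]]. specialize (Hafter m ltac:(lia)).
        split; [auto|lia]. }
      intros a b Ha Hb. destruct (Htop a Ha), (Htop b Hb).
      apply (ladder_point_inj m); auto; congruence. }
    assert (Hsplit := filter_length f J). lia.
Qed.

Lemma ladder_bound_weaken m k k' : k' <= k -> ladder_bound m k -> ladder_bound m k'.
Proof. intros Hk' [J [Hnd [Hlad Hk]]]. exists J. split; [exact Hnd|split; [exact Hlad|lia]]. Qed.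

Lemma ladder_bound_prefix_max m : ladder_bound m (prefix_max m - p O - down_steps m).
Proof.
  induction m as [|m IH].
  - exists nil. split; [constructor|split; [simpl; tauto|simpl; lia]].
  - simpl down_steps. destruct (unit_steps m) as [Hup|Hdown].
    + rewrite (proj2 (Z.ltb_ge _ _)) by lia.
      eapply ladder_bound_weaken; [|exact (ladder_bound_up_step m _ Hup IH)]. lia.
    + rewrite (proj2 (Z.ltb_lt _ _)) by lia.
      eapply ladder_bound_weaken; [|exact (ladder_bound_down_step m _ Hdown IH)].
      assert (Hm := prefix_max_ge m m (le_n m)). simpl prefix_max. lia.
Qed.

Lemma ladder_points_count m : ladder_bound m (p m - p O - down_steps m).
Proof.
  assert (Hmax := prefix_max_ge m m (le_n m)).
  eapply ladder_bound_weaken; [|exact (ladder_bound_prefix_max m)]. lia.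
Qed.

Lemma unit_steps_displacement m : p m - p O = Z.of_nat m - 2 * down_steps m.
Proof.
  induction m as [|m IH]; [simpl; lia|]. simpl down_steps.
  destruct (unit_steps m) as [H|H]; destruct (Z.ltb_spec (p (S m)) (p m)); lia.
Qed.

End LadderPoints.

Lemma sqrt_sum_sq_le_succ a a' b : 0 <= a' <= a + 1 ->
  sqrt (a' ^ 2 + b ^ 2) <= sqrt (a ^ 2 + b ^ 2) + 1.
Proof.
  intros Ha'. assert (Hb2 := pow2_ge_0 b). assert (Ha2 := pow2_ge_0 a).
  set (s := sqrt (a ^ 2 + b ^ 2)).
  assert (Hs : 0 <= s) by apply sqrt_pos.
  assert (Hs2 : s * s = a ^ 2 + b ^ 2) by (apply sqrt_sqrt; lra).
  assert (Has : Rabs a <= s).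
  { unfold s. rewrite <- sqrt_Rsqr_abs. apply sqrt_le_1_alt. unfold Rsqr. lra. }
  assert (a <= Rabs a) by apply Rle_abs.
  rewrite <- (sqrt_pow2 (s + 1)) by lra. apply sqrt_le_1_alt. nra.
Qed.

Lemma transverse_dist_nil_l n w : transverse_dist n nil w = 0.
Proof. apply sqrt_0. Qed.

Lemma transverse_dist_nil_r n u : transverse_dist n u nil = 0.
Proof. unfold transverse_dist. rewrite combine_nil. apply sqrt_0. Qed.

Lemma transverse_dist_cons n a u b w :
  transverse_dist n (a :: u) (b :: w) =
  sqrt (IZR (tor_dist1 n a b) ^ 2 + transverse_dist n u w ^ 2).
Proof.
  unfold transverse_dist at 1 2. cbn [combine map fold_right fst snd].
  rewrite pow2_sqrt; [reflexivity|].
  induction (combine u w) as [|[c e] l IH]; cbn [map fold_right]; [lra|].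
  assert (H := pow2_ge_0 (IZR (tor_dist1 n (fst (c, e)) (snd (c, e))))). lra.
Qed.

Lemma transverse_dist_refl n u : transverse_dist n u u = 0.
Proof.
  induction u as [|a u IH]; [apply transverse_dist_nil_l|].
  rewrite transverse_dist_cons, IH. unfold tor_dist1.
  rewrite Z.sub_diag, Zmod_0_l, Z.sub_0_r, Z.min_l by lia.
  replace (IZR 0 ^ 2 + 0 ^ 2) with 0 by (simpl; ring). apply sqrt_0.
Qed.

(* For [n = 0], [tor_dist1] takes the junk value [-|a - b|]; hence the absolute values. *)
Lemma tor_dist1_step n a a' b : per_adj1 n a a' ->
  (Z.abs (tor_dist1 n a' b) <= Z.abs (tor_dist1 n a b) + 1)%Z.
Proof.
  unfold per_adj1, tor_dist1. set (N := Z.of_nat n).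
  destruct (Z.eq_dec N 0) as [E|E].
  - rewrite E, !Zmod_0_r. lia.
  - assert (HN : (0 < N)%Z) by lia.
    assert (Hr := Z.mod_pos_bound (a - b) N HN).
    assert (Hr' := Z.mod_pos_bound (a' - b) N HN).
    intros H.
    assert (Hk : exists k, ((a' - b) mod N - (a - b) mod N = k * N + 1 \/
                        (a' - b) mod N - (a - b) mod N = k * N - 1)%Z).
    { rewrite !Z.mod_eq by lia.
      destruct H as [H|H]; apply Z.mod_divide in H as [k Hk]; auto;
        exists ((a - b) / N - (a' - b) / N - k)%Z; [right|left]; lia. }
    destruct Hk as [k Hk].
    revert Hk Hr Hr'. generalize ((a' - b) mod N)%Z ((a - b) mod N)%Z. intros r' r Hk Hr Hr'.
    destruct (Z.lt_trichotomy k 0) as [Hk0|[->|Hk0]]; [ |lia| ]; nia.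
Qed.

Lemma transverse_dist_step n : forall u u' w i, length u = length u' ->
  (forall j, j <> i -> nth j u 0%Z = nth j u' 0%Z) ->
  per_adj1 n (nth i u 0%Z) (nth i u' 0%Z) ->
  transverse_dist n u' w <= transverse_dist n u w + 1.
Proof.
  induction u as [|a u IH]; intros [|a' u'] w i Hlen Hother Hi; try discriminate.
  - rewrite transverse_dist_nil_l. lra.
  - destruct w as [|b w].
    { rewrite !transverse_dist_nil_r. lra. }
    rewrite !transverse_dist_cons. destruct i as [|i].
    + replace u' with u.
      2:{ apply (nth_ext _ _ 0%Z 0%Z); [simpl in Hlen; lia|].
          intros k _. apply (Hother (S k)). lia. }
      rewrite <- (pow2_abs (IZR (tor_dist1 n a' b))), <- (pow2_abs (IZR (tor_dist1 n a b))).
      apply sqrt_sum_sq_le_succ. split; [apply Rabs_pos|].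
      rewrite !Rabs_Zabs, <- plus_IZR. apply IZR_le, tor_dist1_step, Hi.
    + replace a' with a by exact (Hother 0%nat ltac:(lia)).
      rewrite !(Rplus_comm (IZR (tor_dist1 n a b) ^ 2)).
      apply sqrt_sum_sq_le_succ. split; [apply sqrt_pos|].
      apply (IH u' w i); [simpl in Hlen; lia| |exact Hi].
      intros j Hj. apply (Hother (S j)). lia.
Qed.

Section HeightOfWalk.

Variables (n : nat) (g : nat -> point) (m : nat).
Hypothesis adj : forall i, (i < m)%nat -> nn_adj n (g i) (g (S i)).

Fixpoint height (i : nat) : Z :=
  match i with
  | O => pbar (g O)
  | S i' => if (pbar (g (S i')) - pbar (g i') =? 1)%Z then (height i' + 1)%Z
            else (height i' - 1)%Z
  end.

(* The number of transverse steps before time [i]. *)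
Definition side_steps (i : nat) : Z := (pbar (g i) - height i)%Z.

Lemma height_unit_steps i :
  height (S i) = (height i + 1)%Z \/ height (S i) = (height i - 1)%Z.
Proof. simpl. destruct (_ =? 1)%Z; auto. Qed.

Lemma walk_step_cases i : (i < m)%nat ->
  (side_steps (S i) = side_steps i /\ phat (g (S i)) = phat (g i)) \/
  (height (S i) = (height i - 1)%Z /\ side_steps (S i) = (side_steps i + 1)%Z /\
   forall w, transverse_dist n (phat (g (S i))) w <= transverse_dist n (phat (g i)) w + 1).
Proof.
  intros Hi. unfold side_steps. simpl height.
  destruct (adj i Hi) as [[Hbar Hhat]|[Hbar [Hlen [k [_ [Hk Hother]]]]]];
    destruct (Z.eqb_spec (pbar (g (S i)) - pbar (g i)) 1); try lia.
  - left. split; [lia|auto].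
  - left. split; [lia|auto].
  - right. split; [lia|split; [lia|]]. intros w.
    apply (transverse_dist_step n _ _ w k Hlen); [|exact Hk].
    intros j Hj. apply Hother. auto.
Qed.

Lemma side_steps_mono j k : (j <= k <= m)%nat -> (side_steps j <= side_steps k)%Z.
Proof.
  induction k as [|k IH]; intros Hk.
  - replace j with O by lia. lia.
  - destruct (Nat.eq_dec j (S k)) as [->|]; [lia|].
    specialize (IH ltac:(lia)).
    destruct (walk_step_cases k ltac:(lia)) as [[Hs _]|[_ [Hs _]]]; lia.
Qed.

Lemma transverse_dist_le_side_steps j k : (j <= k <= m)%nat ->
  transverse_dist n (phat (g k)) (phat (g j)) <= IZR (side_steps k - side_steps j).
Proof.
  induction k as [|k IH]; intros Hk.
  - replace j with O by lia. rewrite transverse_dist_refl, Z.sub_diag. lra.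
  - destruct (Nat.eq_dec j (S k)) as [->|].
    { rewrite transverse_dist_refl, Z.sub_diag. lra. }
    specialize (IH ltac:(lia)).
    destruct (walk_step_cases k ltac:(lia)) as [[Hs Hhat]|[_ [Hs Htd]]].
    + rewrite Hs, Hhat. exact IH.
    + rewrite Hs, Z.add_sub_swap, plus_IZR. specialize (Htd (phat (g j))). lra.
Qed.

Lemma side_steps_le_down_steps k : (k <= m)%nat ->
  (side_steps k - side_steps O <= down_steps height k)%Z.
Proof.
  induction k as [|k IH]; intros Hk; [simpl; lia|].
  specialize (IH ltac:(lia)). cbn [down_steps].
  destruct (walk_step_cases k ltac:(lia)) as [[Hs _]|[Hh [Hs _]]];
    destruct (Z.ltb_spec (height (S k)) (height k)); lia.
Qed.

Lemma many_ladder_points :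
  ladder_bound height m (3 * (pbar (g m) - pbar (g O)) - 2 * Z.of_nat m).
Proof.
  assert (Hdisp := unit_steps_displacement height height_unit_steps m).
  assert (Hside := side_steps_le_down_steps m (le_n m)). unfold side_steps in Hside.
  eapply ladder_bound_weaken; [|exact (ladder_points_count height height_unit_steps m)]. lia.
Qed.

Lemma pbar_lt_before_ladder_point j i : ladder_point height m j -> (i < j)%nat ->
  (pbar (g i) < pbar (g j))%Z.
Proof.
  intros [Hjm [Hbefore _]] Hi. assert (Hs := side_steps_mono i j ltac:(lia)).
  specialize (Hbefore i Hi). unfold side_steps in Hs. lia.
Qed.

Variable d : nat.
Hypothesis in_box : forall i, (i <= m)%nat -> in_Lambda d n (g i).

Lemma ladder_point_in_cone j i : ladder_point height m j -> (j <= i <= m)%nat ->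
  cone d n (g j) (g i).
Proof.
  intros [_ [_ Hafter]] Hi. split; [apply in_box; lia|]. left.
  assert (Htd := transverse_dist_le_side_steps j i Hi).
  assert (Hh := Hafter i Hi).
  assert (IZR (side_steps i - side_steps j) <= IZR (pbar (g i) - pbar (g j))).
  { apply IZR_le. unfold side_steps. lia. }
  lra.
Qed.

End HeightOfWalk.

Lemma saw_in_vertices n A x y gamma (p0 : point) : saw_in n A x y gamma ->
  exists m, length gamma = S m /\ nth 0 gamma p0 = x /\ nth m gamma p0 = y /\
    (forall i, (i < m)%nat -> nn_adj n (nth i gamma p0) (nth (S i) gamma p0)) /\
    (forall i, (i <= m)%nat -> A (nth i gamma p0)).
Proof.
  intros [_ [HA [Hhd [Hlast [_ Hadj]]]]].
  destruct gamma as [|x0 rest]; [discriminate|]. injection Hhd as ->.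
  exists (length rest). split; [reflexivity|]. split; [reflexivity|]. split.
  - rewrite <- Hlast. apply nth_length_last.
  - split.
    + intros i Hi. rewrite !(nth_indep _ p0 x) by (simpl; lia). apply Hadj. simpl. lia.
    + intros i Hi. apply HA, nth_In. simpl. lia.
Qed.

Theorem lemma5p4 (d n : nat) (hd : (1 <= d)%nat)
  (delta : R) (hdelta : 0 < delta) (L : nat)
  (A : point -> Prop) (hA : forall u, A u -> in_Lambda d n u)
  (x y : point) (hx : A x) (hy : A y)
  (hxy : pbar y = (pbar x + Z.of_nat L)%Z)
  (gamma : list point) (hgamma : saw_in n A x y gamma)
  (hlen : INR (length gamma) < (1 + delta) * INR L) :
  exists S : list nat,
    NoDup S /\ (forall j, In j S -> pre_regeneration d n gamma j) /\
    INR (length S) >= (1 - 3 * delta) * INR L.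
Proof.
  set (g := fun i => nth i gamma (0%Z, nil)).
  destruct (saw_in_vertices n A x y gamma (0%Z, nil) hgamma)
    as [m [Hlen [Hx [Hy [Hadj HinA]]]]].
  destruct (many_ladder_points n g m Hadj) as [J [HJ [Hlad Hcount]]].
  exists J. split; [exact HJ|split].
  - intros j Hj. destruct (Hlad j Hj) as [Hjm _].
    split; [lia|split].
    + intros i Hi. apply (ladder_point_in_cone n g m Hadj d); [|exact (Hlad j Hj)|lia].
      intros k Hk. apply hA, HinA, Hk.
    + intros i Hi. exact (pbar_lt_before_ladder_point n g m Hadj j i (Hlad j Hj) Hi).
  - change (g m) with (nth m gamma (0%Z, nil)) in Hcount.
    change (g O) with (nth 0 gamma (0%Z, nil)) in Hcount.
    rewrite Hx, Hy, hxy, Z.add_simpl_l in Hcount.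
    apply IZR_le in Hcount. rewrite minus_IZR, !mult_IZR, <- !INR_IZR_INZ in Hcount.
    rewrite Hlen, S_INR in hlen.
    assert (0 <= delta * INR L) by (apply Rmult_le_pos; [lra|apply pos_INR]).
    simpl in Hcount. lra.
Qed.
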